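(* Let $a\in\mathbb{C}^*$, $s,t\ge0$ with $n=s+t\ge1$, and $A=\mathrm{diag}(a,\dots,a,-a,\dots,-a)$ with $s$ entries $a$ and $t$ entries $-a$. Then for every $B\in M_n(\mathbb{C})$ with $AB+BA=0$: (1) $\mathrm{rank}(B)\le2\min(s,t)$; (2) $(A,B)\in\mathscr{Z}_{\min(s,t),\,|s-t|,\,0}$.
   Context: For $(p,m,r)\in\mathbb{Z}_{\ge0}^3$ with $2p+m+r=n$, $\mathscr{Z}_{p,m,r}$ denotes the Zariski closure, in $\mathscr{Z}_n=\{(A,B)\in M_n(\mathbb{C})^2 : AB+BA=0\}$, of the union of the $GL_n$-orbits (simultaneous conjugation) of all pairs $(A,B)\in\mathscr{Z}_n$ with $A=\mathrm{diag}(a_1,-a_1,\dots,a_p,-a_p,a_{p+1},\dots,a_{p+m},0,\dots,0)$ ($r$ zeros), $a_i\in\mathbb{C}^*$, $a_i\ne\pm a_j$ for $i\ne j$. *)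

(* Complex numbers are modelled as R[i] = complex R for an
   arbitrary R : realType (a complete archimedean ordered field, i.e. the reals). *)
From HB Require Import structures.
From mathcomp Require Import all_boot all_order all_algebra.
From mathcomp Require Import reals.
From mathcomp Require Import complex.
From mathcomp Require mpoly.
Set Implicit Arguments. Unset Strict Implicit. Unset Printing Implicit Defensive.
Import Order.TTheory GRing.Theory Num.Theory.
Local Open Scope ring_scope.

Section Defs.
Variable (F : comNzRingType) (n : nat).

Definition pair_coords (P : 'M[F]_n * 'M[F]_n) : 'I_(n * n + n * n) -> F :=
  fun i => (row_mx (mxvec P.1) (mxvec P.2)) 0 i.

Definition zariski_closed (Z : 'M[F]_n * 'M[F]_n -> Prop) : Prop :=
  exists I : mpoly.mpoly (n * n + n * n) F -> Prop,
    forall P, Z P <-> (forall p, I p -> mpoly.meval (pair_coords P) p = 0).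

Definition zariski_closure (S : 'M[F]_n * 'M[F]_n -> Prop) P : Prop :=
  forall Z, zariski_closed Z -> (forall Q, S Q -> Z Q) -> Z P.

Definition Zanti (P : 'M[F]_n * 'M[F]_n) : Prop := P.1 *m P.2 + P.2 *m P.1 = 0.

End Defs.

(* Diagonal entry i (0-based) of
   diag(a_1,-a_1,...,a_p,-a_p,a_(p+1),...,a_(p+m),0,...,0),
   where a_(k+1) is written a k (0-based indexing of the a's). *)
Definition Zdiag (F : comNzRingType) (p m : nat) (a : nat -> F) (i : nat) : F :=
  if (i < 2 * p)%N then (if odd i then - a i./2 else a i./2)
  else if (i < 2 * p + m)%N then a (p + (i - 2 * p))%N
  else 0.

(* Z_{p,m,r} inside Z_n, for 2p+m+r = n: the Zariski closure (in Z_n) of the union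
   of GL_n-orbits of pairs (A,B) in Z_n with A diagonal as above,
   a_i nonzero and a_i <> +- a_j for i <> j. *)
Definition Zpmr (F : fieldType) (n p m r : nat) (P : 'M[F]_n * 'M[F]_n) : Prop :=
  (2 * p + m + r)%N = n /\
  Zanti P /\
  zariski_closure
    (fun Q : 'M[F]_n * 'M[F]_n =>
       exists (a : nat -> F) (B : 'M[F]_n) (g : 'M[F]_n),
         (forall i, (i < p + m)%N -> a i != 0) /\
         (forall i j, (i < p + m)%N -> (j < p + m)%N -> i <> j ->
            a i != a j /\ a i != - a j) /\
         Zanti (diag_mx (\row_(i < n) Zdiag p m a i), B) /\
         g \in unitmx /\
         Q = (g *m diag_mx (\row_(i < n) Zdiag p m a i) *m invmx g,
              g *m B *m invmx g))
    P.
Arguments Zpmr {F} n p m r P.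

From HB Require Import structures.
From mathcomp Require Import all_boot all_order all_algebra.
From mathcomp Require Import reals complex mpoly.
From mathcomp Require Import perm ring zify.
Import Order.TTheory GRing.Theory Num.Theory.
Local Open Scope ring_scope.
Set Implicit Arguments. Unset Strict Implicit. Unset Printing Implicit Defensive.

(* Write s = p + m1, t = p + m2 with m1 = 0 or m2 = 0. Since 2a <> 0, AB + BA = 0
   forces B = [0 X; Y 0] in the block decomposition of A, so that
   rank B <= rank X + rank Y <= 2p.
   The Zariski closure of the orbit set is stable under conjugation (a linear
   change of coordinates) and contains P once it contains P + xQ for all but
   finitely many x (on that line an equation of a closed set is a polynomial in x).
   Block-diagonal conjugations fix A and act by (X, Y) |-> (P X Q^-1, Q Y P^-1).
   Combining them with such lines (rank normal form of X, deformation of X to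
   rank p, Schur form of the top-left block T of Y, deformation of T to a nonzero,
   pairwise distinct diagonal, making it invertible and diagonalizable), B reduces
   to X = [1 0; 0 0], Y = [diag w 0; 0 0]. This B only couples e_k with e_(n1+k),
   k < p, so it anticommutes with every diagonal matrix whose entries at k and
   n1 + k are opposite; such entries affine in x with pairwise distinct slopes give
   a line through A whose generic points lie, up to a permutation of the basis, in
   the orbit set. *)

Section Cofinite.
Variable T : eqType.

Definition cofinite (P : T -> Prop) := exists L : seq T, forall x, x \notin L -> P x.

Lemma cofiniteS (P Q : T -> Prop) : (forall x, P x -> Q x) -> cofinite P -> cofinite Q.
Proof. by move=> PQ [L PL]; exists L => x /PL /PQ. Qed.

Lemma cofiniteI (P Q : T -> Prop) :
  cofinite P -> cofinite Q -> cofinite (fun x => P x /\ Q x).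
Proof.
move=> [L PL] [M QM]; exists (L ++ M) => x; rewrite mem_cat negb_or.
by case/andP=> /PL ? /QM.
Qed.

Lemma cofinite_all (I : finType) (P : I -> T -> Prop) :
  (forall i, cofinite (P i)) -> cofinite (fun x => forall i, P i x).
Proof.
move=> /fin_all_exists[L PL]; exists (flatten [seq L i | i <- enum I]) => x xL i.
apply: PL; apply: contra xL => xLi; apply/flattenP; exists (L i) => //.
by apply/mapP; exists i; rewrite ?mem_enum.
Qed.

End Cofinite.

Lemma cofinite_affine_neq0 (F : fieldType) (c0 c1 : F) :
  c1 != 0 -> cofinite (fun x => c0 + x * c1 != 0).
Proof.
move=> c1n0; exists [:: - c0 / c1] => x; rewrite inE; apply: contra.
by rewrite addrC addr_eq0 => /eqP <-; rewrite mulfK.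
Qed.

Lemma poly_cofinite_roots_eq0 (F : numFieldType) (q : {poly F}) :
  cofinite (fun x => q.[x] = 0) -> q = 0.
Proof.
move=> [L qL]; pose r := q * \prod_(l <- L) ('X - l%:P).
have r_root x : root r x.
  rewrite rootM root_prod_XsubC orbC; have [//|/qL qx] := boolP (x \in L).
  exact/rootP.
have r0 : r = 0.
  apply: (@roots_geq_poly_eq0 _ _ [seq k%:R | k <- iota 0 (size r)]).
  - by apply/allP => y /mapP[k _ ->].
  - by rewrite map_inj_uniq ?iota_uniq // => i j /eqP; rewrite eqr_nat => /eqP.
  - by rewrite size_map size_iota.
apply/eqP; move/eqP: r0; rewrite mulf_eq0 => /orP[] // /negPn.
by rewrite monic_neq0 // monic_prod_XsubC.
Qed.

Section ZariskiLine.
Variables (F : numFieldType) (n : nat).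
Implicit Types (P Q : 'M[F]_n * 'M[F]_n) (S Z : 'M[F]_n * 'M[F]_n -> Prop).

Definition pair_line P Q (x : F) := (P.1 + x *: Q.1, P.2 + x *: Q.2).

Lemma pair_coords_line P Q x i :
  pair_coords (pair_line P Q x) i = pair_coords P i + x * pair_coords Q i.
Proof.
rewrite /pair_coords /= !linearD !linearZ /= !mxE.
by case: splitP => k _; rewrite !mxE.
Qed.

Lemma zariski_closed_line Z P Q :
  zariski_closed Z -> cofinite (fun x => Z (pair_line P Q x)) -> Z P.
Proof.
move=> [I ZI] ZPQ; apply/ZI => p Ip.
pose q : {poly F} := \sum_(m <- msupp p) p@_m *:
  \prod_(i < n * n + n * n) ((pair_coords P i)%:P + pair_coords Q i *: 'X) ^+ m i.
have qE x : q.[x] = p.@[pair_coords (pair_line P Q x)].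
  rewrite mevalE horner_sum; apply: eq_bigr => m _.
  rewrite hornerZ horner_prod; congr (_ * _); apply: eq_bigr => i _.
  by rewrite pair_coords_line !hornerE mulrC.
have q0 : q = 0.
  apply: poly_cofinite_roots_eq0; apply: cofiniteS ZPQ => x /ZI Zx.
  by rewrite qE Zx.
by have := qE 0; rewrite q0 horner0 /pair_line !scale0r !addr0 -surjective_pairing.
Qed.

Lemma zariski_closure_line S P Q :
  cofinite (fun x => zariski_closure S (pair_line P Q x)) -> zariski_closure S P.
Proof.
move=> SPQ Z Zclosed SZ; apply: (zariski_closed_line (Q := Q) Zclosed).
by apply: cofiniteS SPQ => x /(_ Z Zclosed SZ).
Qed.

End ZariskiLine.

Section ZariskiConj.
Variables (F : fieldType) (n : nat).
Local Notation N := (n * n + n * n)%N.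
Implicit Types (P Q : 'M[F]_n * 'M[F]_n) (S : 'M[F]_n * 'M[F]_n -> Prop).

Lemma subset_zariski_closure S P : S P -> zariski_closure S P.
Proof. by move=> SP Z _ /(_ P SP). Qed.

Definition pair_row P : 'rV[F]_N := row_mx (mxvec P.1) (mxvec P.2).

Lemma zariski_closure_linear S1 S2 (phi : 'M[F]_n * 'M[F]_n -> 'M[F]_n * 'M[F]_n)
    (M : 'M[F]_N) :
  (forall P, pair_row (phi P) = pair_row P *m M) -> (forall Q, S1 Q -> S2 (phi Q)) ->
  forall P, zariski_closure S1 P -> zariski_closure S2 (phi P).
Proof.
move=> phiM S12 P S1P Z [I ZI] S2Z.
pose lq : N.-tuple {mpoly F[N]} := [tuple \sum_(j < N) M j i *: 'X_j | i < N].
have lqE Q p : (p \mPo lq).@[pair_coords Q] = p.@[pair_coords (phi Q)].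
  rewrite comp_mpoly_meval; apply: meval_eq => i.
  rewrite -[pair_coords (phi Q) i]/(pair_row (phi Q) 0 i) phiM tnth_mktuple mxE.
  rewrite raddf_sum /=.
  by apply: eq_bigr => j _; rewrite mevalZ mevalXU mulrC.
apply: (S1P (fun Q => Z (phi Q))); last by move=> Q /S12 /S2Z.
exists (fun p' => exists2 p, I p & p' = p \mPo lq) => Q; split.
  by move/ZI => ZQ _ [p Ip ->]; rewrite lqE; apply: ZQ.
by move=> IQ; apply/ZI => p Ip; rewrite -lqE; apply: IQ; exists p.
Qed.

Definition conj_pair (g : 'M[F]_n) P := (g *m P.1 *m invmx g, g *m P.2 *m invmx g).

Definition conj_row (g : 'M[F]_n) (v : 'rV[F]_N) : 'rV[F]_N :=
  pair_row (conj_pair g (vec_mx (lsubmx v), vec_mx (rsubmx v))).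

Fact conj_row_is_linear g : linear (conj_row g).
Proof.
move=> c u v; rewrite /conj_row /pair_row /= !linearP /= !mulmxDl -!scalemxAl.
by rewrite !linearP /= scale_row_mx add_row_mx.
Qed.

HB.instance Definition _ g :=
  GRing.isLinear.Build F _ _ *:%R (conj_row g) (conj_row_is_linear g).

Lemma zariski_closure_conj S g :
  (forall Q, S Q -> S (conj_pair g Q)) ->
  forall P, zariski_closure S P -> zariski_closure S (conj_pair g P).
Proof.
apply: (zariski_closure_linear (M := lin1_mx (conj_row g))) => P.
by rewrite mul_rV_lin1 /= /conj_row /pair_row row_mxKl row_mxKr !mxvecK.
Qed.

End ZariskiConj.

Lemma invmxM (R : comUnitRingType) k (A B : 'M[R]_k) :
  A \in unitmx -> B \in unitmx -> invmx (A *m B) = invmx B *m invmx A.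
Proof.
move=> AU BU; have e : A *m B *m (invmx B *m invmx A) = 1%:M.
  by rewrite mulmxA mulmxK // mulmxV.
by rewrite -[invmx (A *m B)]mulmx1 -e mulKmx // unitmx_mul AU BU.
Qed.

(* The set whose closure is taken in [Zpmr], spelled as there so that the two are
   convertible. *)
Definition Zorbits (F : fieldType) (n p m : nat) (Q : 'M[F]_n * 'M[F]_n) : Prop :=
  exists (a : nat -> F) (B : 'M[F]_n) (g : 'M[F]_n),
    (forall i, (i < p + m)%N -> a i != 0) /\
    (forall i j, (i < p + m)%N -> (j < p + m)%N -> i <> j ->
       a i != a j /\ a i != - a j) /\
    Zanti (diag_mx (\row_(i < n) Zdiag p m a i), B) /\
    g \in unitmx /\
    Q = (g *m diag_mx (\row_(i < n) Zdiag p m a i) *m invmx g,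
         g *m B *m invmx g).
Arguments Zorbits {F} n p m Q.

Definition regular (F : zmodType) (k : nat) (a : nat -> F) : Prop :=
  (forall i, (i < k)%N -> a i != 0) /\
  (forall i j, (i < k)%N -> (j < k)%N -> i <> j -> a i != a j /\ a i != - a j).

Section Zorbits.
Variables (F : fieldType) (n p m : nat).

Lemma Zorbits_conj (g : 'M[F]_n) :
  g \in unitmx -> forall Q, Zorbits n p m Q -> Zorbits n p m (conj_pair g Q).
Proof.
move=> gU Q [a [B [h [a_neq0 [a_sep [anti [hU ->]]]]]]].
exists a, B, (g *m h); do 3!split => //; split; first by rewrite unitmx_mul gU hU.
by rewrite /conj_pair invmxM // !mulmxA.
Qed.

Lemma Zorbits_diag (a : nat -> F) (f : 'I_n -> 'I_n) (d : 'rV[F]_n) (B : 'M[F]_n) :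
  injective f -> regular (p + m) a -> (forall i, d 0 i = Zdiag p m a (f i)) ->
  Zanti (diag_mx d, B) -> Zorbits n p m (diag_mx d, B).
Proof.
move=> f_inj [a_neq0 a_sep] dE; rewrite /Zanti /= => anti.
set D := diag_mx (\row_(i < n) Zdiag p m a i).
pose g : 'M[F]_n := perm_mx (perm f_inj).
have gU : g \in unitmx by apply: unitmx_perm.
have dg : diag_mx d *m g = g *m D.
  apply/matrixP => i j; rewrite mul_diag_mx mul_mx_diag !mxE permE dE.
  by case: eqP => [<-|]; rewrite ?mulr1 ?mul1r ?mulr0 ?mul0r.
have dE' : diag_mx d = g *m D *m invmx g by rewrite -dg mulmxK.
exists a, (invmx g *m B *m g), g; rewrite -/D; do 2!split => //; split; last first.
  by split => //; rewrite dE' !mulmxA mulmxV // mul1mx mulmxK.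
have -> : D = invmx g *m diag_mx d *m g by rewrite -mulmxA dg mulKmx.
rewrite /Zanti /= !mulmxA !mulmxK // -mulmxDl -!mulmxA -mulmxDr.
by rewrite anti mulmx0 mul0mx.
Qed.

End Zorbits.

Lemma affine_separated (F : numFieldType) (k : nat) (a : 'I_k -> F) :
  cofinite (fun x => forall i j : 'I_k,
    a i + x * i.+1%:R != 0 /\
    (i != j -> a i + x * i.+1%:R != a j + x * j.+1%:R /\
               a i + x * i.+1%:R != - (a j + x * j.+1%:R))).
Proof.
have nz : cofinite (fun x => forall i : 'I_k, a i + x * i.+1%:R != 0).
  by apply: cofinite_all => i; apply: cofinite_affine_neq0; rewrite pnatr_eq0.
have sub : cofinite (fun x => forall i j : 'I_k,
    i != j -> (a i - a j) + x * (i.+1%:R - j.+1%:R) != 0).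
  apply: cofinite_all => i; apply: cofinite_all => j.
  have [->|ij] := eqVneq i j; first by exists [::].
  apply: cofiniteS (cofinite_affine_neq0 (a i - a j) (_ : i.+1%:R - j.+1%:R != 0)).
    by move=> x + _.
  by rewrite subr_eq0 eqr_nat eqSS.
have add : cofinite (fun x => forall i j : 'I_k,
    (a i + a j) + x * (i.+1%:R + j.+1%:R) != 0).
  apply: cofinite_all => i; apply: cofinite_all => j.
  by apply: cofinite_affine_neq0; rewrite -natrD pnatr_eq0.
apply: cofiniteS (cofiniteI nz (cofiniteI sub add)) => x [{}nz [{}sub {}add]] i j.
split=> // ij; rewrite -subr_eq0 -addr_eq0; split.
  suff -> : a i + x * i.+1%:R - (a j + x * j.+1%:R) =
            a i - a j + x * (i.+1%:R - j.+1%:R) by exact: sub.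
  by ring.
suff -> : a i + x * i.+1%:R + (a j + x * j.+1%:R) =
          a i + a j + x * (i.+1%:R + j.+1%:R) by exact: add.
by ring.
Qed.

Lemma regular_affine (F : numFieldType) (k : nat) (a : nat -> F) :
  cofinite (fun x => regular k (fun j => a j + x * j.+1%:R)).
Proof.
apply: cofiniteS (affine_separated (fun i : 'I_k => a i)) => x sep.
split=> [i ik | i j ik jk ij]; first exact: (sep (Ordinal ik) (Ordinal ik)).1.
by apply: (sep (Ordinal ik) (Ordinal jk)).2; apply/eqP => -[].
Qed.

Lemma Zdiag_affine (F : comNzRingType) (p m : nat) (a b : nat -> F) (x : F) (i : nat) :
  Zdiag p m (fun j => a j + x * b j) i = Zdiag p m a i + x * Zdiag p m b i.
Proof. by rewrite /Zdiag; do 2!case: ifP => _; rewrite ?opprD ?mulrN ?mulr0 ?addr0. Qed.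

Lemma diag_mx_anticommute (R : comNzRingType) (k : nat) (e : 'rV[R]_k) (M : 'M[R]_k) :
  (forall i j, M i j != 0 -> e 0 i + e 0 j = 0) ->
  diag_mx e *m M + M *m diag_mx e = 0.
Proof.
move=> eM; apply/matrixP => i j; rewrite mul_diag_mx mul_mx_diag !mxE mulrC -mulrDr.
by have [->|/eM ->] := eqVneq (M i j) 0; rewrite ?mulr0 ?mul0r.
Qed.

Lemma rank_offdiag (F : fieldType) (k1 k2 l1 l2 : nat)
    (X : 'M[F]_(k1, l2)) (Y : 'M[F]_(k2, l1)) :
  (\rank (block_mx 0 X Y 0) <= \rank X + \rank Y)%N.
Proof.
rewrite block_mxEv -addsmxE.
have [+ _] := mxrank_adds_leqif (row_mx 0 X) (row_mx Y 0).
by rewrite rank_row_0mx rank_row_mx0.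
Qed.

Lemma trig_diagonalizable (F : fieldType) (k : nat) (T : 'M[F]_k) :
  is_trig_mx T -> injective (fun i => T i i) -> diagonalizable T.
Proof.
case: k T => [|k] T T_trig T_inj.
  by exists 1%:M; rewrite ?unitmx1 //; apply/is_diag_mxP => -[].
apply/diagonalizableP; exists [seq T i i | i <- index_enum 'I_k.+1].
  by rewrite map_inj_uniq ?index_enum_uniq.
by rewrite big_map -char_poly_trig // mxminpoly_dvd_char.
Qed.

Lemma numClosed_trigonalizable (F : numClosedFieldType) (k : nat) (M : 'M[F]_k) :
  trigonalizable M.
Proof.
case: k M => [|k] M.
  by exists 1%:M; rewrite ?unitmx1 //; apply/is_trig_mxP => -[].
have [V V_unitary V_trig] := Schur M (ltn0Sn k).
by exists V; rewrite ?unitarymx_unit.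
Qed.

Ltac lia_ifs := repeat match goal with
  | |- context [if ?b then _ else _] =>
      (have -> : b = true by lia) || (have -> : b = false by lia)
  end.

Section Anticommutant.
Variable F : numClosedFieldType.
Variables (p m1 m2 : nat) (a : F).
Hypotheses (a_neq0 : a != 0) (m1_m2_eq0 : m1 = 0%N \/ m2 = 0%N).
Local Notation n1 := (p + m1)%N.
Local Notation n2 := (p + m2)%N.
Local Notation A :=
  (diag_mx (\row_(i < n1 + n2) if (i < n1)%N then a else - a) : 'M[F]_(n1 + n2)).
Local Notation offdiag X Y := (block_mx 0 X Y 0 : 'M[F]_(n1 + n2)).
Local Notation Cl := (zariski_closure (Zorbits (n1 + n2) p (m1 + m2))).

Lemma A_block : A = block_mx a%:M 0 0 (- a%:M).
Proof.
have -> : \row_(i < n1 + n2) (if (i < n1)%N then a else - a) =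
          row_mx (const_mx a) (const_mx (- a)).
  by apply/rowP => i; rewrite !mxE; case: splitP => j _; rewrite !mxE.
by rewrite diag_mx_row !diag_const_mx raddfN.
Qed.

Lemma anticommutant_offdiag B :
  A *m B + B *m A = 0 -> B = offdiag (ursubmx B) (dlsubmx B).
Proof.
have two_a : a + a != 0 by rewrite -mulr2n mulrn_eq0 negb_or a_neq0.
rewrite A_block -[B]submxK !mulmx_block add_block_mx => /esym.
rewrite -[LHS]block_mx0 => /eq_block_mx[/esym ul _ _ /esym dr].
move: ul dr; rewrite !(mulmx0, mul0mx, addr0, add0r, mulNmx, mulmxN).
rewrite !mul_scalar_mx !mul_mx_scalar -opprD -!scalerDl => /eqP + /eqP.
rewrite oppr_eq0 !scaler_eq0 (negPf two_a) /= => /eqP-> /eqP->.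
by rewrite block_mxKur block_mxKdl.
Qed.

Lemma rank_anticommutant B : A *m B + B *m A = 0 -> (\rank B <= 2 * p)%N.
Proof.
move/anticommutant_offdiag => ->; apply: leq_trans (rank_offdiag _ _) _.
have := rank_leq_row (ursubmx B); have := rank_leq_col (ursubmx B).
have := rank_leq_row (dlsubmx B); have := rank_leq_col (dlsubmx B).
lia.
Qed.

Lemma closure_offdiag_similar (P : 'M[F]_n1) (Q : 'M[F]_n2) X Y X' Y' :
  P \in unitmx -> Q \in unitmx -> P *m X' = X *m Q -> Q *m Y' = Y *m P ->
  Cl (A, offdiag X' Y') -> Cl (A, offdiag X Y).
Proof.
move=> PU QU PX QY; have gU : block_mx P 0 0 Q \in unitmx.
  by rewrite block_diag_mx_unit PU QU.
have conj_scalar k (R : 'M[F]_k) c : R \in unitmx -> R *m c%:M *m invmx R = c%:M.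
  by move=> RU; rewrite scalar_mxC mulmxK.
move=> /(zariski_closure_conj (Zorbits_conj gU)).
rewrite /conj_pair /= invmx_block_diag // A_block !mulmx_block.
rewrite !(mulmx0, mul0mx, addr0, add0r, mulmxN, mulNmx) !conj_scalar //.
by rewrite PX QY !mulmxK.
Qed.

(* Moves the diagonal of A into the order of [Zdiag]: for k < p the entries k and
   n1 + k, which the normal form of B couples, go to the positions 2k and 2k + 1. *)
Definition pair_index (k : nat) : nat :=
  if (k < p)%N then (2 * k)%N else if (k < n1)%N then (p + k)%N
  else if (k < n1 + p)%N then (2 * (k - n1)).+1 else k.

Lemma pair_index_lt (k : 'I_(n1 + n2)) : (pair_index k < n1 + n2)%N.
Proof. by have := ltn_ord k; rewrite /pair_index; repeat case: ifP => ?; lia. Qed.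

Lemma pair_index_inj : injective (fun k => Ordinal (pair_index_lt k)).
Proof.
move=> i j /(congr1 val) /= ij; apply: ord_inj.
move: ij (ltn_ord i) (ltn_ord j) m1_m2_eq0; rewrite /pair_index.
by repeat case: ifP => ?; lia.
Qed.

Lemma Zdiag_pair_index (b : nat -> F) (k : nat) : (k < n1 + n2)%N ->
  Zdiag p (m1 + m2) b (pair_index k) =
  if (k < n1)%N then b k else if (k < n1 + p)%N then - b (k - n1)%N else b (k - n1)%N.
Proof.
move=> kn; rewrite /Zdiag /pair_index.
have [kp|pk] := ltnP k p; first by lia_ifs; f_equal; lia.
have [kn1|n1k] := ltnP k n1; first by lia_ifs; f_equal; lia.
have [kn1p|n1pk] := ltnP k (n1 + p); first by lia_ifs; do 2!f_equal; lia.
by lia_ifs; f_equal; lia.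
Qed.

Lemma pid_diag_support (w : 'rV[F]_p) (i j : 'I_(n1 + n2)) :
  offdiag (pid_mx p) (block_mx (diag_mx w) 0 0 0) i j != 0 ->
  ((i < p) && (j == n1 + i :> nat) || (n1 <= i < n1 + p) && (i == n1 + j :> nat))%N.
Proof.
case: (split_ordP i) => {}i ->; case: (split_ordP j) => {}j ->;
  rewrite ?block_mxEul ?block_mxEur ?block_mxEdl ?block_mxEdr /=.
- by rewrite mxE eqxx.
- by rewrite mxE pnatr_eq0 eqb0 negbK => /andP[/eqP-> ->]; rewrite eqxx.
- case: (split_ordP i) => {}i ->; case: (split_ordP j) => {}j ->;
    rewrite ?block_mxEul ?block_mxEur ?block_mxEdl ?block_mxEdr !mxE ?eqxx //=.
  case: (eqVneq i j) => [->|_]; rewrite ?mulr0n ?eqxx //= => _.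
  by have := ltn_ord j; lia.
- by rewrite mxE eqxx.
Qed.

Lemma Zanti_pair_index (b : nat -> F) (w : 'rV[F]_p) :
  Zanti (diag_mx (\row_(k < n1 + n2) Zdiag p (m1 + m2) b (pair_index k)),
         offdiag (pid_mx p) (block_mx (diag_mx w) 0 0 0)).
Proof.
apply: diag_mx_anticommute => i j /pid_diag_support.
rewrite !mxE !Zdiag_pair_index // => /orP[] /andP[+ /eqP e].
all: rewrite e => range; lia_ifs.
  by rewrite addKn subrr.
by rewrite addKn addNr.
Qed.

Lemma A_Zdiag :
  A = diag_mx (\row_(k < n1 + n2)
        Zdiag p (m1 + m2) (fun j => if ((j < p) || (m2 == 0))%N then a else - a)
          (pair_index k)).
Proof.
congr diag_mx; apply/rowP => k; have := ltn_ord k.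
rewrite !mxE Zdiag_pair_index // => kn.
by have [kn1|n1k] := ltnP k n1; [|have [kn1p|n1pk] := ltnP k (n1 + p)]; lia_ifs.
Qed.

Lemma closure_pid_diag (w : 'rV[F]_p) :
  Cl (A, offdiag (pid_mx p) (block_mx (diag_mx w) 0 0 0)).
Proof.
set alpha := fun j => if ((j < p) || (m2 == 0))%N then a else - a.
pose d (b : nat -> F) := \row_(k < n1 + n2) Zdiag p (m1 + m2) b (pair_index k).
apply: (zariski_closure_line (Q := (diag_mx (d (fun j => j.+1%:R)), 0))).
apply: cofiniteS (regular_affine (p + (m1 + m2)) alpha) => x alpha_reg.
apply: subset_zariski_closure; rewrite /pair_line /= scaler0 addr0.
have -> : A + x *: diag_mx (d (fun j => j.+1%:R)) =
          diag_mx (d (fun j => alpha j + x * j.+1%:R)).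
  rewrite A_Zdiag -/alpha -linearZ -linearD /=; congr diag_mx.
  by apply/rowP => k; rewrite !mxE Zdiag_affine.
apply: (Zorbits_diag pair_index_inj alpha_reg) => [k|]; first by rewrite mxE.
exact: Zanti_pair_index.
Qed.

Lemma closure_pid_conj_ul (V : 'M[F]_p) T Y12 Y21 Y22 : V \in unitmx ->
  Cl (A, offdiag (pid_mx p)
           (block_mx (V *m T *m invmx V) (V *m Y12) (Y21 *m invmx V) Y22)) ->
  Cl (A, offdiag (pid_mx p) (block_mx T Y12 Y21 Y22)).
Proof.
move=> VU; have VU' k : (block_mx (invmx V) 0 0 1%:M : 'M[F]_(p + k)) \in unitmx.
  by rewrite block_diag_mx_unit unitmx_inv VU unitmx1.
apply: (closure_offdiag_similar (VU' m1) (VU' m2)).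
  by rewrite !pid_mx_block !mulmx_block !(mulmx0, mul0mx, mulmx1, mul1mx, addr0, add0r).
rewrite !mulmx_block !(mulmx0, mul0mx, mulmx1, mul1mx, addr0, add0r).
by rewrite -!mulmxA !mulKmx.
Qed.

Lemma closure_pid_diagonalizable T : diagonalizable T ->
  Cl (A, offdiag (pid_mx p) (block_mx T 0 0 0)).
Proof.
case=> V VU /similar_diagPex[w /(similarRL VU) Tw].
apply: (closure_pid_conj_ul VU); rewrite -Tw mulmx0 mul0mx.
exact: closure_pid_diag.
Qed.

Lemma corner_eq0 (M : 'M[F]_(m2, m1)) : M = 0.
Proof.
apply/matrixP => i j; exfalso.
by have := ltn_ord i; have := ltn_ord j; lia.
Qed.

Lemma closure_pid_unit T Y12 Y21 Y22 : T \in unitmx ->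
  Cl (A, offdiag (pid_mx p) (block_mx T 0 0 0)) ->
  Cl (A, offdiag (pid_mx p) (block_mx T Y12 Y21 Y22)).
Proof.
(* Unipotent block conjugations clear Y12 and Y21; the corner Y22 is empty. *)
move=> TU; apply: (closure_offdiag_similar
  (P := block_mx 1%:M (- (invmx T *m Y12)) 0 1%:M)
  (Q := block_mx 1%:M 0 (Y21 *m invmx T) 1%:M)).
- by rewrite unitmxE det_ublock !det1 mulr1 unitr1.
- by rewrite unitmxE det_lblock !det1 mulr1 unitr1.
- by rewrite !pid_mx_block !mulmx_block !(mulmx0, mul0mx, mulmx1, mul1mx, addr0, add0r).
rewrite !mulmx_block !(mulmx0, mul0mx, mulmx1, mul1mx, addr0, add0r).
by rewrite mulmxN mulKVmx // addNr mulmxKV // [_ + Y22]corner_eq0.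
Qed.

Lemma closure_pid_trig T Y12 Y21 Y22 : is_trig_mx T ->
  Cl (A, offdiag (pid_mx p) (block_mx T Y12 Y21 Y22)).
Proof.
move=> /is_trig_mxP T_trig; pose D : 'M[F]_p := diag_mx (\row_(k < p) k.+1%:R).
apply: (zariski_closure_line (Q := (0, offdiag 0 (block_mx D 0 0 0)))).
apply: cofiniteS (affine_separated (fun i => T i i)) => x sep.
rewrite /pair_line /= scaler0 addr0 !scale_block_mx !scaler0 !add_block_mx !addr0.
set T' := T + x *: D.
have T'_diag i : T' i i = T i i + x * i.+1%:R by rewrite !mxE eqxx mulr1n.
have T'_trig : is_trig_mx T'.
  apply/is_trig_mxP => i j ij; rewrite !mxE T_trig // add0r.
  by rewrite -val_eqE (ltn_eqF ij) mulr0n mulr0.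
apply: closure_pid_unit.
  rewrite unitmxE det_trig // unitfE; apply/prodf_neq0 => i _.
  by rewrite T'_diag; case: (sep i i).
apply: closure_pid_diagonalizable; apply: trig_diagonalizable => // i j /=.
rewrite !T'_diag => e; apply: contraTeq isT => ij.
by case: (sep i j) => _ /(_ ij) []; rewrite e eqxx.
Qed.

Lemma closure_pid Y : Cl (A, offdiag (pid_mx p) Y).
Proof.
rewrite -[Y]submxK; have [V VU] := numClosed_trigonalizable (ulsubmx Y).
rewrite /similar_to conjumx // => V_trig.
by apply: (closure_pid_conj_ul VU); apply: closure_pid_trig.
Qed.

Lemma closure_pid_rank r Y : (r <= p)%N -> Cl (A, offdiag (pid_mx r) Y).
Proof.
move=> rp; apply: (zariski_closure_line (Q := (0, offdiag (pid_mx p - pid_mx r) 0))).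
exists [:: 0] => x; rewrite inE => x_neq0.
rewrite /pair_line /= scaler0 addr0 !scale_block_mx !scaler0 !add_block_mx !addr0.
(* E rescales the rows r, ..., p - 1 of pid_mx p by x. *)
pose E : 'M[F]_n1 := diag_mx (\row_(i < n1) if (i < r)%N then 1 else x).
apply: (closure_offdiag_similar (P := E) (Q := 1%:M) (X' := pid_mx p) (Y' := Y *m E)).
- rewrite unitmxE det_diag unitfE; apply/prodf_neq0 => i _.
  by rewrite mxE; case: ifP; rewrite ?oner_eq0.
- exact: unitmx1.
- apply/matrixP => i j; rewrite mulmx1 mul_diag_mx !mxE.
  have [ir|ri] := ltnP i r; last by rewrite andbF mulr0n subr0 add0r.
  by rewrite (leq_trans ir rp) subrr mulr0 addr0 mul1r.
- by rewrite mul1mx.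
exact: closure_pid.
Qed.

Lemma closure_offdiag X Y : Cl (A, offdiag X Y).
Proof.
have invU : invmx (row_ebase X) \in unitmx by rewrite unitmx_inv row_ebase_unit.
apply: (closure_offdiag_similar (col_ebase_unit X) invU
  (X' := pid_mx (\rank X)) (Y' := row_ebase X *m Y *m col_ebase X)).
- by rewrite -(mulmxK (row_ebase_unit X) (col_ebase X *m _)) mulmx_ebase.
- by rewrite -!mulmxA mulKmx ?row_ebase_unit.
apply: closure_pid_rank; have := rank_leq_row X; have := rank_leq_col X; lia.
Qed.

Lemma closure_anticommutant B : A *m B + B *m A = 0 -> Cl (A, B).
Proof. by move/anticommutant_offdiag => ->; apply: closure_offdiag. Qed.

End Anticommutant.

Theorem lemma4p1 (R : realType) (s t : nat) (a : R[i]) :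
  a != 0 -> (0 < s + t)%N ->
  forall B : 'M[R[i]]_(s + t),
    let A : 'M[R[i]]_(s + t) :=
      diag_mx (\row_(i < s + t) (if (i < s)%N then a else - a)) in
    A *m B + B *m A = 0 ->
    (\rank B <= 2 * minn s t)%N /\
    Zpmr (s + t) (minn s t) (maxn s t - minn s t) 0 (A, B).
Proof.
move=> a_neq0 _.
have [p [m1 [m2 [-> -> m1_m2_eq0]]]] :
    exists p m1 m2, [/\ s = (p + m1)%N, t = (p + m2)%N & m1 = 0%N \/ m2 = 0%N].
  case: (leqP s t) => st; last by exists t, (s - t)%N, 0%N; split; lia.
  by exists s, 0%N, (t - s)%N; split; lia.
move=> B; cbv zeta => anti.
have -> : minn (p + m1) (p + m2) = p by lia.
have -> : (maxn (p + m1) (p + m2) - p = m1 + m2)%N by lia.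
split; first exact: (rank_anticommutant (p := p) a_neq0 m1_m2_eq0 anti).
split; first lia.
by split; last exact: (closure_anticommutant (p := p) a_neq0 m1_m2_eq0 anti).
Qed.
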